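(* Let $A\subseteq B$ be an extension of commutative rings, and regard $B$ as a subring of $B\otimes_A B$ via $b\mapsto b\otimes 1$. Then $\mathfrak{C}(A,B)=\mathfrak{C}(A,B\otimes_AB)$; that is, the canonical map $\mathfrak{C}(A,B)\to\mathfrak{C}(A,B\otimes_AB)$ induced by the inclusion of groups of invertible ideals is an isomorphism.
   Context: For an extension of rings $R\subseteq S$ and $R$-submodules $L,L'$ of $S$, $LL'$ is the $R$-submodule of finite sums $\sum x_ky_k$. An $R$-submodule $L$ of $S$ is an invertible ideal of $R\subseteq S$ if $LL'=R$ for some $R$-submodule $L'$ of $S$; these form an abelian group $\mathscr{G}(R,S)$ and $\mathfrak{C}(R,S)=\mathscr{G}(R,S)/\{Rx: x\in S^\ast\}$. *)

From HB Require Import structures.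
From mathcomp Require Import all_boot all_algebra.
Set Implicit Arguments. Unset Strict Implicit. Unset Printing Implicit Defensive.
Import GRing.Theory.
Local Open Scope ring_scope.

Definition seteq (S : Type) (X Y : S -> Prop) : Prop := forall x, X x <-> Y x.

Definition subring (S : comPzRingType) (A : S -> Prop) : Prop :=
  A 1 /\ (forall x y, A x -> A y -> A (x - y)) /\ (forall x y, A x -> A y -> A (x * y)).

Definition submod (S : comPzRingType) (R L : S -> Prop) : Prop :=
  L 0 /\ (forall x y, L x -> L y -> L (x + y)) /\
  (forall r x, R r -> L x -> L (r * x)).

Definition prodm (S : comPzRingType) (L L' : S -> Prop) : S -> Prop :=
  fun z => exists s : seq (S * S),
    (forall p, p \in s -> L p.1 /\ L' p.2) /\ z = \sum_(p <- s) p.1 * p.2.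

Definition invertible (S : comPzRingType) (R L : S -> Prop) : Prop :=
  submod R L /\ exists L', submod R L' /\ seteq (prodm L L') R.

Definition principal (S : comPzRingType) (R : S -> Prop) (x : S) : S -> Prop :=
  fun z => exists r, R r /\ z = r * x.

(* L and M define the same class in C(R,S) = G(R,S)/{Rx : x in S^*},
   i.e. L = M (Rx) for some unit x of S *)
Definition class_eq (S : comPzRingType) (R L M : S -> Prop) : Prop :=
  exists x : S, (exists y : S, x * y = 1) /\ seteq L (prodm M (principal R x)).

Definition img (S T : Type) (f : S -> T) (L : S -> Prop) : T -> Prop :=
  fun t => exists s, L s /\ t = f s.

(* (T, i1, i2) is the tensor product B ⊗_A B of commutative rings, i.e. the
   pushout of B <- A -> B in commutative rings (universal property), with
   i1 b = b ⊗ 1 and i2 b = 1 ⊗ b. *)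
Definition is_tensor_square (B T : comPzRingType) (A : B -> Prop)
    (i1 i2 : {rmorphism B -> T}) : Prop :=
  (forall a, A a -> i1 a = i2 a) /\
  forall (C : comPzRingType) (g1 g2 : {rmorphism B -> C}),
    (forall a, A a -> g1 a = g2 a) ->
    exists h : {rmorphism T -> C},
      ((forall b, h (i1 b) = g1 b) /\ (forall b, h (i2 b) = g2 b)) /\
      forall h' : {rmorphism T -> C},
        (forall b, h' (i1 b) = g1 b) -> (forall b, h' (i2 b) = g2 b) ->
        forall t, h' t = h t.

From mathcomp Require Import all_boot all_algebra.
From Stdlib Require Import FunctionalExtensionality PropExtensionality.
Set Implicit Arguments. Unset Strict Implicit. Unset Printing Implicit Defensive.
Import GRing.Theory.
Local Open Scope ring_scope.

(* The multiplication map B ⊗_A B -> B is a ring retraction mu of i1, and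
   everything only uses such a retraction.  The class maps induced by i1 and
   by mu compose to the identity, so the map induced by i1 is injective.  For
   surjectivity, let N be invertible over A with N N' = A, and write
   1 = sum_k n_k n'_k.  The idempotent e = i1 o mu fixes every product n n'_k,
   which lies in A; hence z = sum_k n_k e(n'_k) satisfies e(n) z = n for all n
   in N, is a unit with inverse sum_k e(n_k) n'_k, and N = e(N) z is in the
   class of the image of mu(N). *)

Lemma seteqE (S : Type) (X Y : S -> Prop) : seteq X Y <-> X = Y.
Proof.
split=> [XY | ->]; last by [].
by apply: functional_extensionality => x; apply: propositional_extensionality.
Qed.

Lemma img_can (S S' : Type) (f : S -> S') (g : S' -> S) (X : S -> Prop) :
  cancel f g -> img g (img f X) = X.
Proof.
move=> fK; apply/seteqE => x; split=> [[_ [[y [Xy ->]] ->]] | Xx].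
  by rewrite fK.
by exists (f x); split; [exists x | rewrite fK].
Qed.

Section Products.
Variables (S : comPzRingType) (L M : S -> Prop).

Lemma prodm0 : prodm L M 0.
Proof. by exists [::]; rewrite big_nil. Qed.

Lemma prodmD x y : prodm L M x -> prodm L M y -> prodm L M (x + y).
Proof.
move=> [s [sLM ->]] [t [tLM ->]]; exists (s ++ t); rewrite big_cat; split=> //.
by move=> p; rewrite mem_cat => /orP[/sLM | /tLM].
Qed.

Lemma prodm_mul x y : L x -> M y -> prodm L M (x * y).
Proof.
by move=> Lx My; exists [:: (x, y)]; rewrite big_seq1; split=> // p /[!inE] /eqP ->.
Qed.

End Products.

Section Image.
Variables (S T : comPzRingType) (f : {rmorphism S -> T}).

Lemma img_prodm (L M : S -> Prop) :
  img f (prodm L M) = prodm (img f L) (img f M).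
Proof.
apply/seteqE => x; split=> [[_ [[s [sLM ->]] ->]] | [s [sLM ->]]].
  rewrite rmorph_sum big_seq; apply: big_ind => [||p /sLM[Lp Mp]].
  - exact: prodm0.
  - exact: prodmD.
  - by rewrite rmorphM; apply: prodm_mul; [exists p.1 | exists p.2].
rewrite big_seq; apply: big_ind => [|_ _ [y [Py ->]] [z [Pz ->]]|p /sLM].
- by exists 0; rewrite rmorph0; split=> //; apply: prodm0.
- by exists (y + z); rewrite rmorphD; split=> //; apply: prodmD.
- move=> [[y [Ly ->]] [z [Mz ->]]].
  by exists (y * z); rewrite rmorphM; split=> //; apply: prodm_mul.
Qed.

Lemma img_principal (R : S -> Prop) x :
  img f (principal R x) = principal (img f R) (f x).
Proof.
apply/seteqE => y; split=> [[_ [[r [Rr ->]] ->]] | [_ [[r [Rr ->]] ->]]].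
  by exists (f r); rewrite rmorphM; split=> //; exists r.
by exists (r * x); rewrite rmorphM; split=> //; exists r.
Qed.

Lemma submod_img (R L : S -> Prop) : submod R L -> submod (img f R) (img f L).
Proof.
move=> [L0 [LD LM]]; split; first by exists 0; rewrite rmorph0.
split=> [_ _ [x [Lx ->]] [y [Ly ->]] | _ _ [r [Rr ->]] [x [Lx ->]]].
  by exists (x + y); rewrite rmorphD; split=> //; apply: LD.
by exists (r * x); rewrite rmorphM; split=> //; apply: LM.
Qed.

Lemma invertible_img (R L : S -> Prop) :
  invertible R L -> invertible (img f R) (img f L).
Proof.
move=> [subL [L' [subL' /seteqE LL']]]; split; first exact: submod_img.
exists (img f L'); split; first exact: submod_img.
by apply/seteqE; rewrite -img_prodm LL'.
Qed.

Lemma class_eq_img (R L M : S -> Prop) :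
  class_eq R L M -> class_eq (img f R) (img f L) (img f M).
Proof.
move=> [x [[y xy1] /seteqE ->]]; exists (f x); split.
  by exists (f y); rewrite -rmorphM xy1 rmorph1.
by apply/seteqE; rewrite img_prodm img_principal.
Qed.

End Image.

Section Retraction.
Variables (S T : comPzRingType) (f : {rmorphism S -> T}) (mu : {rmorphism T -> S}).
Hypothesis fK : cancel f mu.

Lemma class_eq_img_inj (R L M : S -> Prop) :
  class_eq (img f R) (img f L) (img f M) -> class_eq R L M.
Proof. by move/(class_eq_img mu); rewrite !img_can. Qed.

Lemma invertible_img_retraction (R : S -> Prop) (N : T -> Prop) :
  invertible (img f R) N -> invertible R (img mu N).
Proof. by move/(invertible_img mu); rewrite img_can. Qed.

Lemma retraction_img_fixed (X : S -> Prop) t : img f X t -> f (mu t) = t.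
Proof. by move=> [s [_ ->]]; rewrite fK. Qed.

Lemma invertible_retraction_unit (R : S -> Prop) (N : T -> Prop) :
  R 1 -> invertible (img f R) N ->
  exists2 z, (exists y, z * y = 1) & forall n, N n -> f (mu n) * z = n.
Proof.
move=> R1 [_ [N' [_ /seteqE NN'R]]].
have NN'_fixed n n' : N n -> N' n' -> f (mu (n * n')) = n * n'.
  move=> Nn N'n'; apply: (retraction_img_fixed (X := R)).
  by rewrite -NN'R; apply: prodm_mul.
have [s [sNN' s1]] : prodm N N' 1 by rewrite NN'R; exists 1; rewrite rmorph1.
set z := \sum_(p <- s) p.1 * f (mu p.2).
have zK n : N n -> f (mu n) * z = n.
  move=> Nn; rewrite -[RHS]mulr1 s1 !big_distrr.
  apply: eq_big_seq => p /sNN'[_ N'p2].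
  by rewrite /= mulrCA -!rmorphM NN'_fixed // mulrCA.
exists z => //; exists (\sum_(p <- s) f (mu p.1) * p.2).
rewrite [RHS]s1 big_distrr; apply: eq_big_seq => p /sNN'[Np1 _].
by rewrite /= mulrA [z * _]mulrC zK.
Qed.

Lemma class_eq_retraction (R : S -> Prop) (N : T -> Prop) :
  R 1 -> invertible (img f R) N -> class_eq (img f R) N (img f (img mu N)).
Proof.
move=> R1 invN; have [z zunit zK] := invertible_retraction_unit R1 invN.
have [[N0 [ND NM]] _] := invN.
exists z; split=> // w; split=> [Nw | [s [sN ->]]].
  exists [:: (f (mu w), z)]; rewrite big_seq1 zK //.
  split=> // p /[!inE] /eqP -> /=; split.
    by exists (mu w); split=> //; exists w.
  by exists 1; rewrite mul1r; split=> //; exists 1; rewrite rmorph1.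
rewrite big_seq; apply: big_ind => // p /sN[[_ [[n [Nn ->]] ->]] [r [fRr ->]]].
by rewrite mulrCA zK //; apply: NM.
Qed.

End Retraction.

Lemma tensor_square_retraction (B T : comPzRingType) (A : B -> Prop)
    (i1 i2 : {rmorphism B -> T}) :
  is_tensor_square A i1 i2 -> exists mu : {rmorphism T -> B}, cancel i1 mu.
Proof.
move=> [_ univ]; have [mu [[i1K _] _]] := univ B idfun idfun (fun _ _ => erefl).
by exists mu.
Qed.

Theorem corollary5p14 (B T : comPzRingType) (A : B -> Prop)
    (i1 i2 : {rmorphism B -> T}) :
  subring A -> is_tensor_square A i1 i2 ->
  let AT := img i1 A in
  (* inclusion G(A,B) -> G(A,T) *)
  (forall L, invertible A L -> invertible AT (img i1 L)) /\
  (* it is a homomorphism *)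
  (forall L M, invertible A L -> invertible A M ->
     seteq (img i1 (prodm L M)) (prodm (img i1 L) (img i1 M))) /\
  (* it induces a well-defined map on class groups *)
  (forall L M, invertible A L -> invertible A M ->
     class_eq A L M -> class_eq AT (img i1 L) (img i1 M)) /\
  (* injective on class groups *)
  (forall L M, invertible A L -> invertible A M ->
     class_eq AT (img i1 L) (img i1 M) -> class_eq A L M) /\
  (* surjective on class groups *)
  (forall N, invertible AT N ->
     exists L, invertible A L /\ class_eq AT N (img i1 L)).
Proof.
move=> [A1 _] /tensor_square_retraction [mu i1K] /=.
split; first exact: invertible_img.
split; first by move=> L M _ _; apply/seteqE; apply: img_prodm.
split; first by move=> L M _ _; apply: class_eq_img.
split; first by move=> L M _ _; apply: (class_eq_img_inj i1K).
move=> N invN; exists (img mu N); split.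
  exact: (invertible_img_retraction i1K).
exact: (class_eq_retraction i1K A1).
Qed.
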